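(* Let $B \in \mathbb{R}^{n \times m}$, $c \in \mathbb{R}^m_>$, and let $C = C_1 \times \cdots \times C_\ell \subseteq \mathbb{R}^m_>$ be a nonempty coefficient cone with cones $C_i \subseteq \mathbb{R}^{m_i}_>$, $m_1 + \cdots + m_\ell = m$. Let $P$, $D$, $L$, $I$, $M$ be as in the context, let $M^* \in \mathbb{R}^{(m-\ell)\times n}$ be any generalized inverse of $M$ (i.e. $M M^* M = M$), and set $E = I\,M^* \in \mathbb{R}^{m \times n}$. Then the solution set \[ Z_c = \{ x \in \mathbb{R}^n_> \mid (c \circ x^B) \in C \} \] can be written as \[ Z_c = \{ (y \circ c^{-1})^E \mid y \in Y_c \} \circ e^{L^\perp}, \qquad Y_c = \{ y \in P \mid y^z = c^z \text{ for all } z \in D \}. \]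
   Context: Notation: $\mathbb{R}_>$ denotes the positive reals. For $x \in \mathbb{R}^n_>$ and $y \in \mathbb{R}^n$, $x^y = \prod_{i=1}^n x_i^{y_i}$; for $Y = (y^1,\ldots,y^m) \in \mathbb{R}^{n\times m}$, $x^Y \in \mathbb{R}^m_>$ is given by $(x^Y)_j = x^{y^j}$. The symbol $\circ$ denotes the componentwise product, $c^{-1}$ the componentwise inverse, and for a set $S \subseteq \mathbb{R}^n_>$ and a subspace $V$, $S \circ e^{V} = \{ s \circ e^v \mid s \in S, v \in V\}$ with $e^v$ componentwise. A cone here means a set closed under multiplication by positive scalars. The partition $m = m_1+\cdots+m_\ell$ splits indices $\{1,\ldots,m\}$ into $\ell$ consecutive classes, correspondingly $B = (B_1 \ \cdots\ B_\ell)$ with $B_i \in \mathbb{R}^{n\times m_i}$. Definitions: $\Delta = \Delta_{m_1-1}\times\cdots\times\Delta_{m_\ell-1}$ with $\Delta_{m_i-1} = \{ y \in \mathbb{R}^{m_i}_{\ge} \mid \sum_j y_j = 1\}$; the coefficient set is $P = C \cap \Delta$. For $k \ge 1$, $I_k = \begin{pmatrix} \mathrm{id}_{k-1} \\ -1_{k-1}^{\mathsf T}\end{pmatrix} \in \mathbb{R}^{k\times(k-1)}$, and $I = \mathrm{diag}(I_{m_1},\ldots,I_{m_\ell}) \in \mathbb{R}^{m\times(m-\ell)}$ is block-diagonal. $M = B\,I \in \mathbb{R}^{n\times(m-\ell)}$, the monomial difference subspace is $L = \operatorname{im} M \subseteq \mathbb{R}^n$, and $L^\perp$ its orthogonal complement.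 $J = \mathrm{diag}(1_{m_1}^{\mathsf T},\ldots,1_{m_\ell}^{\mathsf T}) \in \mathbb{R}^{\ell\times m}$ is block-diagonal, $\mathcal{B} = \begin{pmatrix} B \\ J\end{pmatrix} \in \mathbb{R}^{(n+\ell)\times m}$, and the monomial dependency subspace is $D = \ker \mathcal{B} \subseteq \mathbb{R}^m$. *)

From HB Require Import structures.
From mathcomp Require Import all_boot all_order all_algebra.
From mathcomp Require Import all_classical all_reals all_analysis.
Set Implicit Arguments. Unset Strict Implicit. Unset Printing Implicit Defensive.
Import Order.TTheory GRing.Theory Num.Theory.
Local Open Scope ring_scope.

Section Defs.
Variable R : realType.

Definition posv k (x : 'cV[R]_k) : Prop := forall i, 0 < x i 0.

Definition hprod k (x y : 'cV[R]_k) : 'cV[R]_k := \col_i (x i 0 * y i 0).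
Definition cinv k (x : 'cV[R]_k) : 'cV[R]_k := \col_i (x i 0)^-1.
Definition cexp k (v : 'cV[R]_k) : 'cV[R]_k := \col_i expR (v i 0).

Definition vpow k (x y : 'cV[R]_k) : R := \prod_i (x i 0) `^ (y i 0).
Definition mpow k m (x : 'cV[R]_k) (Y : 'M[R]_(k, m)) : 'cV[R]_m :=
  \col_j \prod_i (x i 0) `^ (Y i j).

Definition is_cone k (S : set 'cV[R]_k) : Prop :=
  forall x t, S x -> 0 < t -> S (t *: x).

Variables (l : nat) (ms : 'I_l -> nat).
Notation m := (\sum_(i < l) ms i)%N.

(* product cone C = C_1 x ... x C_l, blocks of consecutive indices *)
Definition prod_cone (Cs : forall i : 'I_l, set 'cV[R]_(ms i)) : set 'cV[R]_m :=
  [set y | forall i, Cs i (submxcol y i)].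

Definition simplex k : set 'cV[R]_k :=
  [set y | (forall a, 0 <= y a 0) /\ \sum_a y a 0 = 1].

Definition Delta : set 'cV[R]_m := [set y | forall i, simplex (submxcol y i)].

(* I = diag(I_{m_1}, ..., I_{m_l}) in R^{m x (m - l)}, where
   I_k = (id_{k-1} ; -1_{k-1}^T) in R^{k x (k-1)}; the diagonal blocks are
   written entrywise since block (i,j) has type 'M_(ms i, (ms j).-1). *)
Definition Imat : 'M[R]_(m, \sum_(i < l) (ms i).-1) :=
  \mxblock_(i < l, j < l)
    (if i == j then \matrix_(a < ms i, b < (ms j).-1)
                      (if (a == b :> nat) then 1
                       else if (a == (ms i).-1 :> nat) then -1 else 0)
     else 0).

(* J = diag(1_{m_1}^T, ..., 1_{m_l}^T) in R^{l x m} *)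
Definition Jmat : 'M[R]_(l, m) :=
  \mxrow_(j < l) (\matrix_(i < l, b < ms j) (i == j)%:R).

End Defs.

From HB Require Import structures.
From mathcomp Require Import all_boot all_order all_algebra.
From mathcomp Require Import all_classical all_reals all_analysis.
Import Order.TTheory GRing.Theory Num.Theory.
Local Open Scope ring_scope.
Local Open Scope classical_set_scope.

Set Implicit Arguments.
Unset Strict Implicit.

(* Taking componentwise logarithms linearizes everything: for x = e^a the
   point c ∘ x^B becomes e^(ln c + B^T a).  As the C_i are cones in the
   positive orthant, membership in C is invariant under adding vectors of
   im J^T (blockwise rescaling), and every point of C rescales into Delta.
   The conditions y^z = c^z for z in D = ker [B; J] say exactly that
   ln y - ln c lies in im [B; J]^T = im B^T + im J^T.  Since ker I^T = im J^T
   and M M* M = M, the vector E^T (ln y - ln c) then solves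
   ln c + B^T a = ln y (mod im J^T) for a, uniquely up to ker M^T = L^⊥. *)

Section LogCoordinates.
Variable R : realType.

Definition lnv k (x : 'cV[R]_k) : 'cV[R]_k := \col_i ln (x i 0).

Lemma posv_cexp k (a : 'cV[R]_k) : posv (cexp a).
Proof. by move=> i; rewrite mxE expR_gt0. Qed.

Lemma lnvK k (x : 'cV[R]_k) : posv x -> cexp (lnv x) = x.
Proof.
by move=> px; apply/matrixP => i j; rewrite !mxE ord1 lnK // posrE px.
Qed.

Lemma hprod_cexp k (a b : 'cV[R]_k) : hprod (cexp a) (cexp b) = cexp (a + b).
Proof. by apply/matrixP => i j; rewrite !mxE expRD. Qed.

Lemma cinv_cexp k (a : 'cV[R]_k) : cinv (cexp a) = cexp (- a).
Proof. by apply/matrixP => i j; rewrite !mxE expRN. Qed.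

Lemma mpow_cexp k p (a : 'cV[R]_k) (Y : 'M[R]_(k, p)) :
  mpow (cexp a) Y = cexp (Y^T *m a).
Proof.
apply/matrixP => i j; rewrite !mxE expR_sum; apply: eq_bigr => r _.
by rewrite !mxE /powR gt_eqF ?expR_gt0 // expRK mulrC.
Qed.

Lemma vpow_cexp k (a z : 'cV[R]_k) : vpow (cexp a) z = expR ((z^T *m a) 0 0).
Proof.
rewrite /vpow !mxE expR_sum; apply: eq_bigr => r _.
by rewrite !mxE /powR gt_eqF ?expR_gt0 // expRK mulrC.
Qed.

End LogCoordinates.

Section Orthogonality.
Variable F : fieldType.

Lemma orthogonal_ker_im_trmx p k (A : 'M[F]_(p, k)) (w : 'cV[F]_k) :
  (forall z : 'cV[F]_k, A *m z = 0 -> z^T *m w = 0) ->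
  exists r : 'cV[F]_p, w = A^T *m r.
Proof.
move=> orth_w.
have w_coker : w^T *m cokermx A = 0.
  apply/matrixP => i j; have Aj : A *m col j (cokermx A) = 0.
    by rewrite colE mulmxA mulmx_coker mul0mx.
  have := congr1 (fun N : 'M[F]_1 => N 0 0) (orth_w _ Aj).
  rewrite !mxE ord1 => orth_j; rewrite -[X in _ = X]orth_j.
  by apply: eq_bigr => x _; rewrite !mxE mulrC.
have /submxP [r wT] : (w^T <= A)%MS by rewrite submxE w_coker.
by exists r^T; rewrite -[w]trmxK wT trmx_mul.
Qed.

Lemma orthogonal_imP p k (M : 'M[F]_(p, k)) (v : 'cV[F]_p) :
  (forall u, [set M *m w | w in [set: 'cV[F]_k]] u -> \sum_i v i 0 * u i 0 = 0)
  <-> M^T *m v = 0.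
Proof.
have dotE w : \sum_i v i 0 * (M *m w) i 0 = ((M^T *m v)^T *m w) 0 0.
  rewrite trmx_mul trmxK -mulmxA mxE.
  by apply: eq_bigr => i _; rewrite [v^T 0 i]mxE.
split=> [orth_v | MTv _ [w _ <-]]; last by rewrite dotE MTv trmx0 mul0mx mxE.
apply/matrixP => j z; rewrite ord1.
have := orth_v _ (ex_intro2 _ _ (delta_mx j 0) I erefl).
by rewrite dotE -colE !mxE.
Qed.

Lemma trmx_ginv_id p k (M : 'M[F]_(p, k)) (Ms : 'M[F]_(k, p)) (r : 'cV[F]_p) :
  M *m Ms *m M = M -> M^T *m (Ms^T *m (M^T *m r)) = M^T *m r.
Proof. by move=> MMsM; rewrite !mulmxA -!trmx_mul mulmxA MMsM. Qed.

End Orthogonality.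

Section Blocks.
Variable R : realType.

Definition Iblock k : 'M[R]_(k, k.-1) := \matrix_(a < k, b < k.-1)
  (if (a == b :> nat) then 1 else if (a == k.-1 :> nat) then -1 else 0).

Lemma trIblock_mul k (v : 'cV[R]_k.+1) :
  (Iblock k.+1)^T *m v = \col_b (v (widen_ord (leqnSn k) b) 0 - v ord_max 0).
Proof.
apply/matrixP => b j; rewrite ord1 !mxE big_ord_recr /= !mxE eqxx.
rewrite (gtn_eqF (ltn_ord b)) mulN1r (bigD1 b) //= !mxE eqxx mul1r.
rewrite big1 ?addr0 // => a /negbTE a_neq_b; rewrite !mxE.
have -> : (a == b :> nat) = false := a_neq_b.
by rewrite (ltn_eqF (ltn_ord a)) mul0r.
Qed.

Lemma trIblock_mul_const k (a : R) : (Iblock k)^T *m (const_mx a : 'cV_k) = 0.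
Proof.
case: k => [|k]; first by apply/matrixP => -[].
by rewrite trIblock_mul; apply/matrixP => b j; rewrite !mxE subrr.
Qed.

Lemma trIblock_ker k (v : 'cV[R]_k) :
  (Iblock k)^T *m v = 0 -> forall a b, v a 0 = v b 0.
Proof.
case: k v => [v _ [] //|k v]; rewrite trIblock_mul => /matrixP v_diff.
suff v_last a : v a 0 = v ord_max 0 by move=> a b; rewrite !v_last.
have [a_lt_k | ] := ltnP a k; last first.
  move=> a_ge_k; suff -> : a = ord_max by [].
  by apply/val_inj/eqP; rewrite /= eqn_leq a_ge_k andbT -ltnS ltn_ord.
move: (v_diff (Ordinal a_lt_k) 0); rewrite !mxE => /eqP.
rewrite subr_eq0 => /eqP <-.
by congr (v _ 0); apply: val_inj.
Qed.

Variables (l : nat) (ms : 'I_l -> nat).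
Local Notation m := (\sum_(i < l) ms i)%N.

Hypothesis ms_gt0 : forall i, (0 < ms i)%N.

Lemma submxcol_trImat_mul (u : 'cV[R]_m) i :
  submxcol ((Imat R ms)^T *m u) i = (Iblock (ms i))^T *m submxcol u i.
Proof.
rewrite -{1}(submxcolK u) /Imat tr_mxblock mul_mxblock_mxrow mxcolK.
rewrite (bigD1 i) //= eqxx big1 ?addr0 // => j /negbTE; rewrite eq_sym => ->.
by rewrite trmx0 mul0mx.
Qed.

Lemma submxcol_trJmat_mul (t : 'cV[R]_l) i :
  submxcol ((Jmat R ms)^T *m t) i = const_mx (t i 0).
Proof.
rewrite /Jmat tr_mxrow mxcol_mul mxcolK; apply/matrixP => a z.
rewrite !mxE (bigD1 i) //= !mxE eqxx mul1r big1 ?addr0 ?ord1 //.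
move=> j /negbTE j_neq_i.
by rewrite !mxE j_neq_i mul0r.
Qed.

Lemma trImat_mul_trJmat (t : 'cV[R]_l) :
  (Imat R ms)^T *m ((Jmat R ms)^T *m t) = 0.
Proof.
apply/mxcolP => i.
by rewrite submxcol_trImat_mul submxcol_trJmat_mul trIblock_mul_const submxcol0.
Qed.

Lemma trImat_ker (u : 'cV[R]_m) :
  (Imat R ms)^T *m u = 0 -> exists t, u = (Jmat R ms)^T *m t.
Proof.
move=> Iu.
exists (\col_i submxcol u i (Ordinal (ms_gt0 i)) 0); apply/mxcolP => i.
apply/matrixP => a z; rewrite submxcol_trJmat_mul ord1 !mxE.
have Iu_i : (Iblock (ms i))^T *m submxcol u i = 0.
  by rewrite -submxcol_trImat_mul Iu submxcol0.
by have := trIblock_ker Iu_i a (Ordinal (ms_gt0 i)); rewrite !mxE.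
Qed.

Lemma submxcol_trJmat_scale (y : 'cV[R]_m) (t : 'cV[R]_l) i :
  submxcol (hprod y (cexp ((Jmat R ms)^T *m t))) i
  = expR (t i 0) *: submxcol y i.
Proof.
apply/matrixP => a z; move: (submxcol_trJmat_mul t i) => /matrixP/(_ a z).
by rewrite !mxE ord1 => ->; rewrite mulrC.
Qed.

Lemma prod_cone_scale (Cs : forall i, set 'cV[R]_(ms i)) y t :
  (forall i, is_cone (Cs i)) -> prod_cone Cs y ->
  prod_cone Cs (hprod y (cexp ((Jmat R ms)^T *m t))).
Proof.
by move=> Cs_cone Cy i; rewrite submxcol_trJmat_scale; apply/Cs_cone/expR_gt0.
Qed.

Lemma prod_cone_posv (Cs : forall i, set 'cV[R]_(ms i)) y :
  (forall i, Cs i `<=` [set x | posv x]) -> prod_cone Cs y -> posv y.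
Proof.
by move=> Cs_pos Cy k; rewrite -(submxcolK y) mxE; apply: Cs_pos (Cy _) _.
Qed.

Lemma Delta_scale (q : 'cV[R]_m) : posv q ->
  exists t, Delta (hprod q (cexp ((Jmat R ms)^T *m t))).
Proof.
move=> q_pos; exists (\col_i - ln (\sum_a submxcol q i a 0)) => i.
have qi_pos a : 0 < submxcol q i a 0 by rewrite mxE.
have sum_pos : 0 < \sum_a submxcol q i a 0.
  rewrite (bigD1 (Ordinal (ms_gt0 i))) //= ltr_pwDl ?qi_pos //.
  by rewrite sumr_ge0 // => a _; apply/ltW.
rewrite submxcol_trJmat_scale mxE expRN lnK ?posrE //; split=> [a|].
  by rewrite mxE mulr_ge0 ?invr_ge0 ?ltW.
by under eq_bigr do rewrite mxE; rewrite -mulr_sumr mulVf ?gt_eqF.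
Qed.

End Blocks.

Unset Implicit Arguments.

Section SolutionSet.
Variables (R : realType) (n l : nat) (ms : 'I_l -> nat).
Variable B : 'M[R]_(n, \sum_(i < l) ms i).
Variable Mstar : 'M[R]_(\sum_(i < l) (ms i).-1, n).
Local Notation I := (Imat R ms).
Local Notation J := (Jmat R ms).
Local Notation M := (B *m I).
Local Notation E := (I *m Mstar).
Hypothesis ms_gt0 : forall i, (0 < ms i)%N.
Hypothesis M_ginv : M *m Mstar *m M = M.

Lemma trImat_mul_trB (a : 'cV[R]_n) (t : 'cV[R]_l) :
  I^T *m (B^T *m a + J^T *m t) = M^T *m a.
Proof. by rewrite mulmxDr trImat_mul_trJmat addr0 mulmxA -trmx_mul. Qed.

Lemma trM_residual_eq0 (a : 'cV[R]_n) (t : 'cV[R]_l) :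
  M^T *m (a - E^T *m (B^T *m a + J^T *m t)) = 0.
Proof.
by rewrite mulmxBr [E^T]trmx_mul -mulmxA trImat_mul_trB trmx_ginv_id // subrr.
Qed.

Lemma trB_trE_rowspace (r : 'cV[R]_(n + l)) (v : 'cV[R]_n) : M^T *m v = 0 ->
  exists t, B^T *m (E^T *m ((col_mx B J)^T *m r) + v)
            = (col_mx B J)^T *m r + J^T *m t.
Proof.
move=> Mv; set w := _ *m r.
have Iw : I^T *m w = M^T *m usubmx r.
  by rewrite /w tr_col_mx -{1}(vsubmxK r) mul_row_col trImat_mul_trB.
have /(trImat_ker ms_gt0) [t ut] : I^T *m (B^T *m (E^T *m w + v) - w) = 0.
  have trIB x : I^T *m (B^T *m x) = M^T *m x by rewrite mulmxA -trmx_mul.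
  rewrite mulmxBr trIB mulmxDr Mv addr0 [E^T]trmx_mul -mulmxA Iw.
  by rewrite trmx_ginv_id // -Iw subrr.
by exists t; rewrite -ut [w + _]addrC subrK.
Qed.

Variable c : 'cV[R]_(\sum_(i < l) ms i).
Variable Cs : forall i : 'I_l, set 'cV[R]_(ms i).
Hypothesis c_pos : posv c.
Hypothesis Cs_cone : forall i : 'I_l, is_cone (Cs i).
Hypothesis Cs_pos : forall i : 'I_l, Cs i `<=` [set x | posv x].

Local Notation Zc := [set x | posv x /\ prod_cone Cs (hprod c (mpow x B))].
Local Notation Yc := [set y | (prod_cone Cs `&` @Delta R l ms) y /\
  forall z, col_mx B J *m z = 0 -> vpow y z = vpow c z].

Lemma Zc_decompose x : Zc x ->
  exists2 y, Yc y & exists2 v, M^T *m v = 0 &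
    hprod (mpow (hprod y (cinv c)) E) (cexp v) = x.
Proof.
move=> [x_pos Cq]; pose a := lnv x; pose lc := lnv c.
have qE : hprod c (mpow x B) = cexp (lc + B^T *m a).
  by rewrite -{1}(lnvK c_pos) -{1}(lnvK x_pos) mpow_cexp hprod_cexp.
have [t Dy] := Delta_scale ms_gt0 (posv_cexp (lc + B^T *m a)).
pose w := B^T *m a + J^T *m t.
have yE : hprod (cexp (lc + B^T *m a)) (cexp (J^T *m t)) = cexp (lc + w).
  by rewrite hprod_cexp addrA.
exists (cexp (lc + w)).
  split; first by split; rewrite -yE // -qE; apply: prod_cone_scale.
  move=> z /eqP; rewrite mul_col_mx col_mx_eq0 => /andP[/eqP Bz /eqP Jz].
  have zw : z^T *m w = 0.
    by rewrite mulmxDr !mulmxA -!trmx_mul Bz Jz !trmx0 !mul0mx addr0.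
  by rewrite -(lnvK c_pos) !vpow_cexp mulmxDr zw addr0.
exists (a - E^T *m w); first exact: trM_residual_eq0.
rewrite -(lnvK c_pos) cinv_cexp !hprod_cexp addrAC subrr add0r.
by rewrite mpow_cexp hprod_cexp addrC subrK lnvK.
Qed.

Lemma Zc_param y v : Yc y -> M^T *m v = 0 ->
  Zc (hprod (mpow (hprod y (cinv c)) E) (cexp v)).
Proof.
move=> [[Cy _] y_c] Mv; have y_pos := prod_cone_posv Cs_pos Cy.
pose w := lnv y - lnv c.
have yc : hprod y (cinv c) = cexp w.
  by rewrite -{1}(lnvK y_pos) -{1}(lnvK c_pos) cinv_cexp hprod_cexp.
have [r wr] : exists r, w = (col_mx B J)^T *m r.
  apply: orthogonal_ker_im_trmx => z /y_c.
  rewrite -{1}(lnvK y_pos) -{1}(lnvK c_pos) !vpow_cexp => /expR_inj yc_z.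
  by rewrite mulmxBr [z^T *m lnv y]mx11_scalar yc_z -mx11_scalar subrr.
have [t tE] := trB_trE_rowspace r v Mv.
rewrite yc mpow_cexp hprod_cexp; split; first exact: posv_cexp.
rewrite -{1}(lnvK c_pos) mpow_cexp hprod_cexp wr tE -wr.
rewrite addrA [lnv c + _]addrC subrK -hprod_cexp lnvK //.
exact: prod_cone_scale.
Qed.

End SolutionSet.

Theorem theorem4 (R : realType) (n l : nat) (ms : 'I_l -> nat)
  (B : 'M[R]_(n, \sum_(i < l) ms i))
  (c : 'cV[R]_(\sum_(i < l) ms i))
  (Cs : forall i : 'I_l, set 'cV[R]_(ms i))
  (Mstar : 'M[R]_(\sum_(i < l) (ms i).-1, n)) :
  (forall i, (0 < ms i)%N) ->
  posv c ->
  (forall i, is_cone (Cs i)) ->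
  (forall i, Cs i `<=` [set x | posv x]) ->
  prod_cone Cs !=set0 ->
  let C := prod_cone Cs in
  let P := C `&` @Delta R l ms in
  let M := B *m @Imat R l ms in
  M *m Mstar *m M = M ->
  let E := @Imat R l ms *m Mstar in
  let calB := col_mx B (@Jmat R l ms) in
  let D := [set z : 'cV[R]_(\sum_(i < l) ms i) | calB *m z = 0] in
  let L := [set M *m w | w in [set: 'cV[R]_(\sum_(i < l) (ms i).-1)]] in
  let Lperp := [set v : 'cV[R]_n | forall u, L u -> \sum_k v k 0 * u k 0 = 0] in
  let Zc := [set x : 'cV[R]_n | posv x /\ C (hprod c (mpow x B))] in
  let Yc := [set y | P y /\ forall z, D z -> vpow y z = vpow c z] in
  Zc = [set hprod (mpow (hprod y (cinv c)) E) (cexp v) | y in Yc & v in Lperp].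
Proof.
move=> ms_gt0 c_pos Cs_cone Cs_pos _ C P M M_ginv E calB D L Lperp Zc Yc.
have -> : Lperp = [set v | M^T *m v = 0].
  by apply/seteqP; split=> v /orthogonal_imP.
apply/seteqP; split=> [x Zx | _ [y Yy [v Lv <-]]].
- exact: Zc_decompose.
- exact: Zc_param.
Qed.
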